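(* There exists a dichotomous hedonic game such that no finite sequence of IS deviations starting from the singleton partition ends in an individually stable partition.
   Context: A dichotomous hedonic game (DHG) on agents $N$ gives each agent $i$ a function $v_i$ from the coalitions containing $i$ to $\{0,1\}$ (approve/disapprove), and $i$ weakly prefers $C$ to $C'$ iff $v_i(C)\ge v_i(C')$. The singleton partition is $\{\{i\}:i\in N\}$. An IS deviation of agent $i$ from partition $\pi$ to $\pi'$ is a move of $i$ alone from $\pi(i)$ into another coalition of $\pi$ or into a new singleton such that $i$ strictly prefers $\pi'(i)$ to $\pi(i)$ and every $j\in\pi'(i)\setminus\{i\}$ weakly prefers $\pi'(j)$ to $\pi(j)$. A partition is individually stable (IS) if no IS deviation is possible from it. *)

From mathcomp Require Import all_boot.
Set Implicit Arguments. Unset Strict Implicit. Unset Printing Implicit Defensive.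

(* A dichotomous hedonic game on the finite agent set T: v i C is agent i's
   approval (true = 1, false = 0) of coalition C; only its values on
   coalitions C containing i are meaningful. *)
Definition dhg (T : finType) := T -> {set T} -> bool.

Definition singleton_partition (T : finType) : {set {set T}} :=
  [set [set x] | x : T].

(* The partition obtained from P when agent i leaves its coalition pblock P i
   and joins the coalition C (C = set0 means: i forms a new singleton).
   Empty blocks are discarded. *)
Definition move (T : finType) (P : {set {set T}}) (i : T) (C : {set T})
  : {set {set T}} :=
  ((P :\ pblock P i :\ C) :|: [set pblock P i :\ i; C :|: [set i]]) :\ set0.

(* An IS deviation of agent i from P to P': i moves alone into another
   coalition C of P or into a new singleton (C = set0); i strictly prefers
   the new coalition, and every j in pi'(i) \ {i} = C weakly prefers
   pi'(j) = C :|: {i} to pi(j) = C. *)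
Definition IS_deviation (T : finType) (v : dhg T) (P P' : {set {set T}}) : Prop :=
  exists (i : T) (C : {set T}),
    ((C \in P /\ C != pblock P i) \/ C = set0) /\
    P' = move P i C /\
    (v i (C :|: [set i]) && ~~ v i (pblock P i)) /\
    (forall j, j \in C -> (v j C ==> v j (C :|: [set i]))).

Definition individually_stable (T : finType) (v : dhg T) (P : {set {set T}}) : Prop :=
  ~ exists P', IS_deviation v P P'.

Fixpoint IS_sequence (T : finType) (v : dhg T) (P : {set {set T}})
    (s : seq {set {set T}}) : Prop :=
  match s with
  | [::] => True
  | Q :: s' => IS_deviation v P Q /\ IS_sequence v Q s'
  end.

(* Take three agents 0, 1, 2 where agent i approves exactly the coalition
   {i, i-1 (mod 3)}.  A deviating agent i must end up in that coalition, so
   every IS deviation lets i join the block {i-1}.  Hence from the singleton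
   partition only the partitions {{i, i-1}, {i+1}} are reachable, and in
   each of them agent i-1 can join the singleton {i+1}, whose member is
   unhappy as well: the dynamics cycle through these three partitions and
   never reach an individually stable one. *)
From mathcomp Require Import all_boot.

Set Implicit Arguments.
Unset Strict Implicit.
Unset Printing Implicit Defensive.

Section InvariantPartitions.

Variables (T : finType) (v : dhg T) (inv : {set {set T}} -> Prop).
Hypothesis inv_IS_deviation : forall P Q, inv P -> IS_deviation v P Q -> inv Q.

Lemma inv_last_IS_sequence P s : inv P -> IS_sequence v P s -> inv (last P s).
Proof.
elim: s P => [//|Q s IHs] P invP /= [PQ Qs].
exact: IHs Q (inv_IS_deviation invP PQ) Qs.
Qed.

End InvariantPartitions.

Lemma pblock_unique (T : finType) (P : {set {set T}}) x X :
  (forall B, (B \in P) && (x \in B) = (B == X)) -> pblock P x = X.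
Proof.
move=> blocks_of_x; rewrite /pblock; case: pickP => [B /= PxB | noB].
  by apply/eqP; rewrite -blocks_of_x.
by have := noB X; rewrite /= blocks_of_x eqxx.
Qed.

Lemma pblock_singleton_partition (T : finType) (x : T) :
  pblock (singleton_partition T) x = [set x].
Proof.
apply: pblock_unique => B; apply/andP/eqP => [[/imsetP[y _ ->]]|->].
  by rewrite inE => /eqP->.
by rewrite imset_f ?set11.
Qed.

Definition pair_partition (T : finType) (i j k : T) : {set {set T}} :=
  [set [set i; j]; [set k]].

Lemma pblock_pair_partition (T : finType) (i j k x : T) :
  k != i -> k != j -> x \in [:: i; j; k] ->
  pblock (pair_partition i j k) x = if x == k then [set k] else [set i; j].
Proof.
move=> ki kj x_ijk; apply: pblock_unique => B; rewrite !inE.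
have [-> | xk] := eqVneq x k.
  apply/andP/eqP => [[/orP[/eqP-> | /eqP-> //]] | ->]; last by rewrite !inE eqxx orbT.
  by rewrite !inE (negPf ki) (negPf kj).
have x_ij : x \in [set i; j] by move: x_ijk; rewrite !inE (negPf xk) orbF.
apply/andP/eqP => [[/orP[/eqP-> // | /eqP->]] | ->]; last by rewrite eqxx x_ij.
by rewrite inE (negPf xk).
Qed.

Definition a0 : 'I_3 := @Ordinal 3 0 isT.
Definition a1 : 'I_3 := @Ordinal 3 1 isT.
Definition a2 : 'I_3 := @Ordinal 3 2 isT.

Lemma ord3P (i : 'I_3) : [\/ i = a0, i = a1 | i = a2].
Proof.
by case: i => [[|[|[|//]]] lt_i3]; [constructor 1 | constructor 2 | constructor 3];
  apply: val_inj.
Qed.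

Lemma eqset3E (A B : {set 'I_3}) :
  (A == B) = [&& (a0 \in A) == (a0 \in B), (a1 \in A) == (a1 \in B)
               & (a2 \in A) == (a2 \in B)].
Proof.
apply/eqP/and3P => [-> // | [/eqP A0 /eqP A1 /eqP A2]].
by apply/setP => x; case: (ord3P x) => ->.
Qed.

Ltac decide_sets3 :=
  rewrite ?inE ?eqset3E ?inE /=;
  try case: (a0 \in _); try case: (a1 \in _); try case: (a2 \in _); by [].

Definition cyclic_game : dhg 'I_3 := fun i C =>
  if i == a0 then C == [set a0; a2]
  else if i == a1 then C == [set a1; a0]
  else C == [set a2; a1].

Lemma singleton_partition3 :
  singleton_partition 'I_3 = [set [set a0]; [set a1]; [set a2]].
Proof.
apply/setP => B; rewrite !inE; apply/imsetP/idP => [[x _ ->] | ].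
  by case: (ord3P x) => ->; rewrite !eqxx ?orbT.
by case/orP => [/orP[]|] /eqP->; eexists.
Qed.

Definition reachable (P : {set {set 'I_3}}) : Prop :=
  [\/ P = singleton_partition 'I_3, P = pair_partition a0 a2 a1,
      P = pair_partition a1 a0 a2 | P = pair_partition a2 a1 a0].

Lemma reachable_IS_deviation P Q :
  reachable P -> IS_deviation cyclic_game P Q -> reachable Q.
Proof.
case=> ->; case=> i [C [C_target [-> [/andP[approves_new unhappy_old] _]]]];
  case: (ord3P i) => ?; subst i;
  rewrite ?pblock_singleton_partition ?pblock_pair_partition //= in C_target unhappy_old;
  rewrite ?singleton_partition3 in C_target.
all: case: C_target => [[C_in _] | ?];
  [move: C_in; rewrite !inE; repeat case/orP; move/eqP=> ? | ]; subst C;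
  rewrite /cyclic_game /= ?eqset3E ?inE /= in approves_new unhappy_old; try done.
(* Only the six moves of an agent i into the singleton {i-1} pass the approval
   test; each of them yields the pair partition {{i, i-1}, {i+1}}. *)
all: [> apply: Or42 | apply: Or43 | apply: Or44 | apply: Or44 | apply: Or42 | apply: Or43].
all: rewrite /move ?pblock_singleton_partition ?pblock_pair_partition //=.
all: apply/setP => B; rewrite ?singleton_partition3 /pair_partition; decide_sets3.
Qed.

Lemma reachable_not_individually_stable P :
  reachable P -> ~ individually_stable cyclic_game P.
Proof.
case=> ->; apply; eexists;
  [exists a0, [set a2] | exists a2, [set a1] | exists a0, [set a2] | exists a1, [set a0]];
  rewrite ?pblock_singleton_partition ?pblock_pair_partition //= ?singleton_partition3;
  rewrite /pair_partition /cyclic_game /=.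
all: split; [left; split | split; [by [] | split]]; try decide_sets3.
all: by move=> j; rewrite inE => /eqP->; decide_sets3.
Qed.

Theorem proposition6p1 :
  exists (T : finType) (v : dhg T),
    forall s : seq {set {set T}},
      IS_sequence v (singleton_partition T) s ->
      ~ individually_stable v (last (singleton_partition T) s).
Proof.
exists 'I_3, cyclic_game => s dynamics.
apply: reachable_not_individually_stable.
apply: (inv_last_IS_sequence reachable_IS_deviation _ dynamics).
exact: Or41.
Qed.
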